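(* Let $\Lambda\subset H^0(\mathbb{P}^r,\mathcal{O}_{\mathbb{P}^r}(2))$ be a linear system of quadrics with $\dim\Lambda=\alpha+1$, let $\Phi:\mathbb{P}^r\dashrightarrow\mathbb{P}^\alpha$ be the associated rational map, and let $X$ be the base scheme of $\Lambda$. A line $L\subset\mathbb{P}^r$ with $L\cap X=\emptyset$ is such that $\Phi_{|L}:L\to\Phi(L)$ is a double covering of a line if and only if $L$ is a secant line (possibly a tangent line) to a non-linear fibre of $\Phi$.
   Context: Over $\mathbb{C}$. The fibre of $\Phi$ through a point $P\in\mathbb{P}^r\setminus X$ means $\overline{\Phi^{-1}(\Phi(P))}$, the Zariski closure; it is non-linear if it is not a linear subspace. Secant lines include tangent lines (limits with the two points coinciding). *)

From HB Require Import structures.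
From mathcomp Require Import all_boot all_order all_algebra.
From mathcomp Require Import reals.
From mathcomp Require Import complex.
From mathcomp Require Import mpoly.

Set Implicit Arguments.
Unset Strict Implicit.
Unset Printing Implicit Defensive.

Import Order.TTheory GRing.Theory Num.Theory.
Local Open Scope ring_scope.

Section ProjGeom.
Variable R : realType.
Local Notation C := R[i].

(* homogeneous coordinates on P^{n-1}: nonzero row vectors of C^n *)
Definition vec (n : nat) := 'rV[C]_n.

(* two nonzero vectors represent the same projective point *)
Definition proportional n (x y : vec n) : Prop :=
  exists c : C, c != 0 /\ x = c *: y.

Definition ev n (p : {mpoly C[n]}) (x : vec n) : C := p.@[fun i => x ord0 i].

Variables (r alpha : nat).
Variable Q : 'I_alpha.+1 -> {mpoly C[r.+1]}.

(* x (nonzero) lies in the base scheme X of Lambda (set-theoretically; for a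
   line L, L \cap X = empty as schemes iff no point of L is a base point) *)
Definition in_base (x : vec r.+1) : Prop := forall k, ev (Q k) x = 0.

(* the vector of values (Q_0(x), ..., Q_alpha(x)), homogeneous coordinates of Phi(x) *)
Definition Phivec (x : vec r.+1) : vec alpha.+1 := \row_k ev (Q k) x.

Definition Phi_is (x : vec r.+1) (w : vec alpha.+1) : Prop :=
  proportional (Phivec x) w.

(* Phi^{-1}(Phi(P)) as a cone of nonzero vectors *)
Definition preimage_set (P : vec r.+1) : vec r.+1 -> Prop :=
  fun x => x != 0 /\ ~ in_base x /\ Phi_is x (Phivec P).

Definition zariski_closure (S : vec r.+1 -> Prop) : vec r.+1 -> Prop :=
  fun x => x != 0 /\
    forall (d : nat) (p : {mpoly C[r.+1]}), p \is d.-homog ->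
      (forall y, S y -> ev p y = 0) -> ev p x = 0.

Definition fibre (P : vec r.+1) : vec r.+1 -> Prop :=
  zariski_closure (preimage_set P).

End ProjGeom.

Definition is_linear (R : realType) n (F : vec R n -> Prop) : Prop :=
  exists W : {vspace 'rV[R[i]]_n}, forall x : vec R n, x != 0 -> (F x <-> x \in W).

Definition cvg_vec (R : realType) n (a : nat -> vec R n) (l : vec R n) : Prop :=
  forall e : R, 0 < e -> exists N : nat, forall m : nat, (N <= m)%N ->
    forall i, `|a m ord0 i - l ord0 i| < (e%:C)%C.

(* L (a 2-dim subspace, i.e. a line of P^{n-1}) is a secant line of F,
   possibly a tangent line: L is a limit, in the Grassmannian G(2, C^n), of
   lines joining two distinct points p_m, q_m of F. Convergence in the
   Grassmannian is expressed by convergence of suitable bases (the Grassmannian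
   carries the quotient topology of the space of pairs of independent vectors,
   and this quotient map is open). *)
Definition secant_line (R : realType) n (F : vec R n -> Prop)
    (L : {vspace 'rV[R[i]]_n}) : Prop :=
  exists (p q a b : nat -> vec R n) (a0 b0 : vec R n),
    (forall m, F (p m) /\ F (q m) /\ ~ proportional (p m) (q m)) /\
    (forall m, (<[a m]> + <[b m]> = <[p m]> + <[q m]>)%VS) /\
    cvg_vec a a0 /\ cvg_vec b b0 /\
    (<[a0]> + <[b0]> = L)%VS.

(* Phi restricted to the line L is a double covering of a line:
   Phi(L) is a line M of P^alpha and Phi_|L : L -> M has degree 2, i.e. all
   but finitely many points of M have exactly two preimages in L. *)
Definition two_preimages (R : realType) r alpha (Q : 'I_alpha.+1 -> {mpoly R[i][r.+1]})
    (L : {vspace 'rV[R[i]]_r.+1}) (w : vec R alpha.+1) : Prop :=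
  exists x1 x2 : vec R r.+1,
    [/\ x1 \in L, x1 != 0, x2 \in L & x2 != 0] /\
    Phi_is Q x1 w /\ Phi_is Q x2 w /\ ~ proportional x1 x2 /\
    forall x : vec R r.+1, x \in L -> x != 0 -> Phi_is Q x w ->
      proportional x x1 \/ proportional x x2.

Definition double_cover_of_line (R : realType) r alpha
    (Q : 'I_alpha.+1 -> {mpoly R[i][r.+1]}) (L : {vspace 'rV[R[i]]_r.+1}) : Prop :=
  exists M : {vspace 'rV[R[i]]_alpha.+1},
    \dim M = 2%N /\
    (forall x : vec R r.+1, x \in L -> x != 0 -> Phivec Q x \in M) /\
    (forall w : vec R alpha.+1, w \in M -> w != 0 ->
       exists x : vec R r.+1, [/\ x \in L, x != 0 & Phi_is Q x w]) /\
    (exists s : seq (vec R alpha.+1),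
       forall w : vec R alpha.+1, w \in M -> w != 0 -> ~ two_preimages Q L w ->
         exists2 w', w' \in s & proportional w w').

From HB Require Import structures.
From mathcomp Require Import all_boot all_order all_algebra.
From mathcomp Require Import reals complex mpoly.
From mathcomp Require Import ring lra.
From Stdlib Require Import Classical_Prop.
Import Order.TTheory GRing.Theory Num.Theory.
Local Open Scope ring_scope.

Set Implicit Arguments.
Unset Strict Implicit.
Unset Printing Implicit Defensive.

(* Write [L = <a, b>]. Then [Phi(s a + t b) = (s^2, s t, t^2) M] for a [3 x (alpha + 1)]
   matrix [M] with rows [Phi(a)], the polar form of [Phi] at [(a, b)], and [Phi(b)].
   If [M] has rank 3, [Phi] embeds [L] as a conic, so no two points of [L] lie in one fibre;
   as the rank is lower semicontinuous, the same holds for lines close to [L], hence a secant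
   line of a fibre has [rank M <= 2]. Then [Phi_|L = f u1 + g u2] for binary quadratic forms
   [f, g] without common zero (as [L] misses the base locus), and the preimages of
   [w1 u1 + w2 u2] are the roots of [w2 f - w1 g]: two distinct points, except for the
   finitely many [w] at which the discriminant, a nonzero binary quadratic form in [w],
   vanishes.
   Conversely, a double cover has a point with two preimages [x1, x2] in [L], so [L] is a
   secant line of the fibre through [x1]. That fibre is not linear: otherwise it would contain
   [L], which [Phi] maps onto a line, not to a point. *)

Lemma cross_eq0_scale (F : fieldType) (c1 c2 f g : F) :
  (c1 != 0) || (c2 != 0) -> c2 * f = c1 * g ->
  exists l, f = l * c1 /\ g = l * c2.
Proof.
case/orP=> c0 E.
- exists (f / c1); split; first by rewrite divfK.
  by apply: (mulfI c0); rewrite -E; field.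
- exists (g / c2); split; last by rewrite divfK.
  by apply: (mulfI c0); rewrite E; field.
Qed.

Section BinaryQuadraticForm.
Variable F : numClosedFieldType.

Definition binq (h1 h2 h3 s t : F) := h1 * s ^+ 2 + h2 * s * t + h3 * t ^+ 2.

Definition disc (h1 h2 h3 : F) := h2 ^+ 2 - 4 * h1 * h3.

Lemma binq_prodE (c s1 t1 s2 t2 s t : F) :
  binq (c * t1 * t2) (- (c * (t1 * s2 + t2 * s1))) (c * s1 * s2) s t =
  c * (t1 * s - s1 * t) * (t2 * s - s2 * t).
Proof. by rewrite /binq; ring. Qed.

Lemma disc_prodE (c s1 t1 s2 t2 : F) :
  disc (c * t1 * t2) (- (c * (t1 * s2 + t2 * s1))) (c * s1 * s2) =
  c ^+ 2 * (t1 * s2 - t2 * s1) ^+ 2.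
Proof. by rewrite /disc; ring. Qed.

Lemma binq_factor (h1 h2 h3 : F) : (h1 != 0) || (h2 != 0) || (h3 != 0) ->
  exists c s1 t1 s2 t2,
    [/\ c != 0, (s1 != 0) || (t1 != 0), (s2 != 0) || (t2 != 0)
      & [/\ h1 = c * t1 * t2, h2 = - (c * (t1 * s2 + t2 * s1)) & h3 = c * s1 * s2]].
Proof.
have two0 : (2 : F) != 0 by rewrite pnatr_eq0.
have [h10|h10 _] := eqVneq h1 0; last first.
  set d := sqrtC (disc h1 h2 h3); have hd : d ^+ 2 = disc h1 h2 h3 by rewrite sqrtCK.
  exists h1, ((- h2 + d) / (2 * h1)), 1, ((- h2 - d) / (2 * h1)), 1.
  split; rewrite ?oner_neq0 ?orbT //; split; [by rewrite !mulr1|by field|].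
  rewrite -[h3](@mulfK _ (4 * h1)) ?mulf_neq0 ?pnatr_eq0 //.
  by rewrite [h3 * _](_ : _ = h2 ^+ 2 - d ^+ 2); [field|rewrite hd /disc; ring].
have [h30 /=|h30 _] := eqVneq h3 0; first rewrite orbF => h20.
  exists h2, 0, 1, (-1), 0; rewrite h10 h30 oner_neq0 oppr_eq0 oner_neq0 orbT.
  by split=> //; split; ring.
exists h3, 1, 0, 1, (- h2 / h3); rewrite h10 oner_neq0.
by split=> //; split; [ring|field|ring].
Qed.

Lemma binq_root (h1 h2 h3 : F) :
  exists s t, (s != 0) || (t != 0) /\ binq h1 h2 h3 s t = 0.
Proof.
have [/and3P[/eqP-> /eqP-> /eqP->]|hn] := boolP [&& h1 == 0, h2 == 0 & h3 == 0].
  by exists 1, 0; rewrite oner_neq0 /binq; split=> //; ring.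
have nz : (h1 != 0) || (h2 != 0) || (h3 != 0) by rewrite -orbA -!negb_and.
have [c [s1 [t1 [s2 [t2 [_ n1 _ [-> -> ->]]]]]]] := binq_factor nz.
exists s1, t1; split=> //; rewrite binq_prodE; ring.
Qed.

Lemma binq_lincomb (f1 f2 f3 g1 g2 g3 c d s t : F) :
  binq (c * f1 - d * g1) (c * f2 - d * g2) (c * f3 - d * g3) s t =
  c * binq f1 f2 f3 s t - d * binq g1 g2 g3 s t.
Proof. by rewrite /binq; ring. Qed.

Lemma binq_disc0_square (h1 h2 h3 : F) : (h1 != 0) || (h2 != 0) || (h3 != 0) ->
  disc h1 h2 h3 = 0 ->
  exists a s t, [/\ a != 0, (s != 0) || (t != 0)
    & [/\ h1 = a * t ^+ 2, h2 = - (2 * a * s * t) & h3 = a * s ^+ 2]].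
Proof.
case/binq_factor=> c [s1 [t1 [s2 [t2 [c0 n1 n2 [-> -> ->]]]]]].
rewrite disc_prodE => /eqP; rewrite mulf_eq0 !expf_eq0 /= (negbTE c0) subr_eq0.
move=> /eqP E; have [l [E1 E2]] := cross_eq0_scale n1 (etrans E (mulrC _ _)).
have l0 : l != 0 by move: n2; apply: contraTneq => l0; rewrite E1 E2 l0 !mul0r eqxx.
by exists (c * l), s1, t1; rewrite mulf_neq0 // E1 E2; split=> //; split; ring.
Qed.

End BinaryQuadraticForm.

Section QuadraticMonomials.
Variable F : comNzRingType.

Lemma prod_exp_deg0 n (e : 'I_n -> nat) (v : 'I_n -> F) :
  (\sum_k e k = 0)%N -> \prod_k v k ^+ e k = 1.
Proof.
move=> e0; apply: big1 => k _.
have : (e k <= \sum_j e j)%N by rewrite (bigD1 k) //= leq_addr.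
by rewrite e0 leqn0 => /eqP ->.
Qed.

Lemma prod_exp_deg1 n (e : 'I_n -> nat) : (\sum_k e k = 1)%N ->
  exists i, forall v : 'I_n -> F, \prod_k v k ^+ e k = v i.
Proof.
elim: n e => [|n IH] e; first by rewrite big_ord0.
rewrite big_ord_recl; case E0: (e ord0) => [|[|//]] he.
- have [i Hi] := IH _ he; exists (lift ord0 i) => v.
  by rewrite big_ord_recl E0 mul1r (Hi (fun k => v (lift ord0 k))).
- exists ord0 => v; case: he => he.
  by rewrite big_ord_recl E0 (prod_exp_deg0 (fun k => v (lift ord0 k)) he) mulr1.
Qed.

Lemma prod_exp_deg2 n (e : 'I_n -> nat) : (\sum_k e k = 2)%N ->
  exists i j, forall v : 'I_n -> F, \prod_k v k ^+ e k = v i * v j.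
Proof.
elim: n e => [|n IH] e; first by rewrite big_ord0.
rewrite big_ord_recl; case E0: (e ord0) => [|[|[|//]]] he.
- have [i [j Hij]] := IH _ he; exists (lift ord0 i), (lift ord0 j) => v.
  by rewrite big_ord_recl E0 mul1r (Hij (fun k => v (lift ord0 k))).
- case: he => /prod_exp_deg1 [j Hj]; exists ord0, (lift ord0 j) => v.
  by rewrite big_ord_recl E0 (Hj (fun k => v (lift ord0 k))).
- exists ord0, ord0 => v; case: he => he.
  by rewrite big_ord_recl E0 (prod_exp_deg0 (fun k => v (lift ord0 k)) he) mulr1.
Qed.

Lemma meval_dhomog2_comb n (p : {mpoly F[n]}) (u v : 'I_n -> F) (s t : F) :
  p \is 2.-homog ->
  p.@[fun i => s * u i + t * v i] =
  s ^+ 2 * p.@[u] + s * t * (p.@[fun i => u i + v i] - p.@[u] - p.@[v]) + t ^+ 2 * p.@[v].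
Proof.
move=> p2; rewrite !mevalE -!sumrB !mulr_sumr -!big_split /=.
apply: eq_big_seq => m /(dhomog_mf p2); rewrite /= mdegE.
by case/prod_exp_deg2=> i [j Hij]; rewrite !Hij; ring.
Qed.

End QuadraticMonomials.

Section PlanesInVectorSpaces.
Variables (F : fieldType) (V : vectType F).
Implicit Types (a b x : V) (L : {vspace V}).

Definition indep2 a b := forall s t : F, s *: a + t *: b = 0 -> s = 0 /\ t = 0.

Lemma memv_span2P a b x :
  reflect (exists s t, x = s *: a + t *: b) (x \in (<[a]> + <[b]>)%VS).
Proof.
apply: (iffP idP) => [|[s [t ->]]]; last by rewrite memv_add ?memvZ ?memv_line.
by case/memv_addP=> _ /vlineP[s ->] [_ /vlineP[t ->] ->]; exists s, t.
Qed.

Lemma indep2_neq0 a b : indep2 a b -> a != 0 /\ b != 0.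
Proof.
move=> hab; split; apply/eqP => ab0.
- have [|/eqP] := hab 1 0; first by rewrite ab0 scaler0 scale0r addr0.
  by rewrite oner_eq0.
- have [|_ /eqP] := hab 0 1; first by rewrite ab0 scaler0 scale0r addr0.
  by rewrite oner_eq0.
Qed.

Lemma indep2_coord a b s1 t1 s2 t2 : indep2 a b ->
  s1 *: a + t1 *: b = s2 *: a + t2 *: b -> s1 = s2 /\ t1 = t2.
Proof.
move=> hab E; have [] := hab (s1 - s2) (t1 - t2).
  by rewrite !scalerBl addrACA -opprD E subrr.
by move/eqP; rewrite subr_eq0 => /eqP-> /eqP; rewrite subr_eq0 => /eqP->.
Qed.

Lemma memv_span2_neq0 a b x : x \in (<[a]> + <[b]>)%VS -> x != 0 ->
  exists s t, (s != 0) || (t != 0) /\ x = s *: a + t *: b.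
Proof.
case/memv_span2P=> s [t ->] nz; exists s, t; split=> //.
by apply: contraNT nz; rewrite negb_or !negbK => /andP[/eqP-> /eqP->]; rewrite !scale0r addr0.
Qed.

Lemma comb_eq0_line a b s t : s != 0 -> s *: a + t *: b = 0 -> a = (- t / s) *: b.
Proof.
move=> s0 E; apply: (scalerI s0); rewrite scalerA mulrC divfK // scaleNr.
by apply/eqP; rewrite -subr_eq0 opprK E.
Qed.

Lemma combv_neq0 a b s t : indep2 a b -> (s != 0) || (t != 0) -> s *: a + t *: b != 0.
Proof. by move=> hab; apply: contraTneq => /hab[-> ->]; rewrite eqxx. Qed.

Lemma dim_span2_indep2 a b : \dim (<[a]> + <[b]>) = 2%N -> indep2 a b.
Proof.
move=> dim2 s t E.
suff: a \notin <[b]>%VS /\ b != 0.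
  case=> nab b0; have [s0|s0] := eqVneq s 0.
    by move: E; rewrite s0 scale0r add0r => /eqP; rewrite scaler_eq0 (negbTE b0) orbF => /eqP.
  by case/negP: nab; apply/vlineP; exists (- t / s); apply: comb_eq0_line E.
have dim_le1 : forall x y : V, x \in <[y]>%VS -> (\dim (<[x]> + <[y]>) <= 1)%N.
  move=> x y xy; apply: leq_trans (_ : \dim <[y]> <= 1)%N; last first.
    by rewrite dim_vline; case: (y != 0).
  by apply: dimvS; rewrite subv_add -memvE xy subvv.
split; first by apply/negP => /dim_le1; rewrite dim2.
by apply/eqP => b0; move: (dim_le1 b a); rewrite addvC dim2 b0 mem0v => /(_ isT).
Qed.

Lemma indep2_dim_span2 a b : indep2 a b -> \dim (<[a]> + <[b]>) = 2%N.
Proof.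
move=> hab; have [a0 b0] := indep2_neq0 hab.
rewrite dimv_disjoint_sum ?dim_vline ?a0 ?b0 //.
apply/eqP; rewrite -subv0; apply/subvP => x; rewrite memv_cap memv0.
case/andP => /vlineP[s ->] /vlineP[t E].
have [|-> _] := hab s (- t); first by rewrite scaleNr E subrr.
by rewrite scale0r.
Qed.

Lemma dim2_span2 L a b : \dim L = 2%N -> a \in L -> b \in L -> indep2 a b ->
  L = (<[a]> + <[b]>)%VS.
Proof.
move=> dimL aL bL hab; apply/eqP; rewrite eq_sym eqEdim dimL indep2_dim_span2 //.
by rewrite subv_add -!memvE aL bL.
Qed.

Lemma dim2_basis L : \dim L = 2%N -> exists a b, [/\ a \in L, b \in L & indep2 a b].
Proof.
move=> dimL; have L0 : L != 0%VS by apply: contra_eqN dimL => /eqP->; rewrite dimv0.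
have a0 : vpick L != 0 by rewrite vpick0.
have /subvPn[b bL nb] : ~~ (L <= <[vpick L]>)%VS.
  by apply/negP => /dimvS; rewrite dimL dim_vline a0.
exists (vpick L), b; split; rewrite ?memv_pick // => s t E.
have [t0|t0] := eqVneq t 0.
  by move: E; rewrite t0 scale0r addr0 => /eqP; rewrite scaler_eq0 (negbTE a0) orbF => /eqP.
by case/negP: nb; apply/vlineP; exists (- s / t); apply: comb_eq0_line t0 _; rewrite addrC.
Qed.

End PlanesInVectorSpaces.

Section Veronese.
Variable F : fieldType.

Definition veronese2 (s t : F) : 'rV[F]_3 := \row_(i < 3) [:: s ^+ 2; s * t; t ^+ 2]`_i.

Lemma veronese2_eq0 (s t : F) : veronese2 s t = 0 -> s = 0 /\ t = 0.
Proof.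
move/rowP => E; have := E ord0; have := E (lift ord0 (lift ord0 ord0)).
by rewrite !mxE /= => /eqP; rewrite expf_eq0 /= => /eqP-> /eqP; rewrite expf_eq0 => /eqP.
Qed.

Lemma veronese2_scale_proportional (s1 t1 s2 t2 c : F) : (s2 != 0) || (t2 != 0) ->
  veronese2 s1 t1 = c *: veronese2 s2 t2 -> exists l, s1 = l * s2 /\ t1 = l * t2.
Proof.
move=> st2 /rowP E; apply: cross_eq0_scale st2 _.
have := E ord0; have := E (lift ord0 ord0); have := E (lift ord0 (lift ord0 ord0)).
rewrite !mxE /= => E3 E2 E1; apply/eqP; rewrite -subr_eq0.
suff /eqP : (t2 * s1 - s2 * t1) ^+ 2 = 0 by rewrite expf_eq0.
transitivity (s1 ^+ 2 * t2 ^+ 2 - 2 * (s1 * t1) * (s2 * t2) + s2 ^+ 2 * t1 ^+ 2).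
  by ring.
by rewrite E1 E2 E3; ring.
Qed.

End Veronese.

Section Proportionality.
Variables (R : realType) (n : nat).
Implicit Types x y z : vec R n.

Lemma proportional_refl x : proportional x x.
Proof. by exists 1; rewrite oner_neq0 scale1r. Qed.

Lemma proportional_sym x y : proportional x y -> proportional y x.
Proof.
case=> c [c0 ->]; exists c^-1; split; first by rewrite invr_eq0.
by rewrite scalerA mulVf // scale1r.
Qed.

Lemma proportional_trans x y z : proportional x y -> proportional y z -> proportional x z.
Proof.
case=> c [c0 ->] [d [d0 ->]]; exists (c * d).
by rewrite scalerA mulf_neq0.
Qed.

Lemma proportional_comb x y s1 t1 s2 t2 l : s1 = l * s2 -> t1 = l * t2 ->
  s1 *: x + t1 *: y != 0 -> proportional (s1 *: x + t1 *: y) (s2 *: x + t2 *: y).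
Proof.
move=> -> -> nz; exists l; split; last by rewrite scalerDr !scalerA.
by apply: contra_neq nz => ->; rewrite !mul0r !scale0r addr0.
Qed.

Lemma proportional_root x y s t s1 t1 : (s1 != 0) || (t1 != 0) ->
  t1 * s = s1 * t -> s *: x + t *: y != 0 ->
  proportional (s *: x + t *: y) (s1 *: x + t1 *: y).
Proof. by move=> st1 /(cross_eq0_scale st1)[l [Es Et]]; apply: proportional_comb Es Et. Qed.

Lemma not_proportional_indep2 x y : x != 0 -> y != 0 -> ~ proportional x y -> indep2 x y.
Proof.
move=> x0 y0 nxy s t E; have [s0|s0] := eqVneq s 0.
  by move: E; rewrite s0 scale0r add0r => /eqP; rewrite scaler_eq0 (negbTE y0) orbF => /eqP.
have t0 : t != 0.
  by apply: contra_neq x0 => t0; move/eqP: E; rewrite t0 scale0r addr0 scaler_eq0 (negbTE s0) => /eqP.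
case: nxy; exists (- t / s); split; first by rewrite mulf_neq0 ?invr_eq0 ?oppr_eq0.
exact: comb_eq0_line E.
Qed.

End Proportionality.

Section ComplexSequences.
Variable R : realType.
Local Notation C := R[i].
Local Notation normc := (@Normc.normc R).

Definition cvgC (u : nat -> C) (l : C) := forall e : R, 0 < e ->
  exists N, forall m, (N <= m)%N -> normc (u m - l) < e.

Lemma normc_ge0 (z : C) : 0 <= normc z.
Proof. by case: z => a b; apply: sqrtr_ge0. Qed.

Lemma cvgC_eq (u v : nat -> C) l : u =1 v -> cvgC u l -> cvgC v l.
Proof. by move=> uv hu e /hu[N HN]; exists N => m /HN; rewrite uv. Qed.

Lemma cvgC_cst (c : C) : cvgC (fun=> c) c.
Proof. by move=> e e0; exists 0%N => m _; rewrite subrr Normc.normc0. Qed.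

Lemma cvgCN u a : cvgC u a -> cvgC (fun m => - u m) (- a).
Proof. by move=> hu e /hu[N HN]; exists N => m /HN; rewrite -opprD normcN. Qed.

Lemma cvgCD u v a b : cvgC u a -> cvgC v b -> cvgC (fun m => u m + v m) (a + b).
Proof.
move=> hu hv e e0; have e2 : 0 < e / 2 by lra.
have [[N1 H1] [N2 H2]] := (hu _ e2, hv _ e2).
exists (maxn N1 N2) => m; rewrite geq_max => /andP[/H1 h1 /H2 h2].
have := le_normcD (u m - a) (v m - b).
by rewrite addrACA -opprD; lra.
Qed.

Lemma cvgCM u v a b : cvgC u a -> cvgC v b -> cvgC (fun m => u m * v m) (a * b).
Proof.
move=> hu hv e e0.
have [A0 B0] := (normc_ge0 a, normc_ge0 b).
pose d := Num.min 1 (e / (normc a + normc b + 1)).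
have d0 : 0 < d by rewrite lt_min ltr01 divr_gt0 //; lra.
have d1 : d <= 1 by rewrite ge_min lexx.
have dK : d * (normc a + normc b + 1) <= e.
  by rewrite -ler_pdivlMr ?ge_min ?lexx ?orbT //; lra.
have [[N1 H1] [N2 H2]] := (hu _ d0, hv _ d0).
exists (maxn N1 N2) => m; rewrite geq_max => /andP[/H1 h1 /H2 h2].
have -> : u m * v m - a * b = (u m - a) * (v m - b) + (a * (v m - b) + b * (u m - a)).
  by ring.
have [X0 Y0] := (normc_ge0 (u m - a), normc_ge0 (v m - b)).
have := le_normcD ((u m - a) * (v m - b)) (a * (v m - b) + b * (u m - a)).
have := le_normcD (a * (v m - b)) (b * (u m - a)).
rewrite !Normc.normcM; nra.
Qed.

Lemma cvgC_sum (I : Type) (r : seq I) (P : pred I) (F : I -> nat -> C) (G : I -> C) :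
  (forall i, cvgC (F i) (G i)) ->
  cvgC (fun m => \sum_(i <- r | P i) F i m) (\sum_(i <- r | P i) G i).
Proof.
move=> H; elim: r => [|x r IH].
  by rewrite big_nil; apply: cvgC_eq (cvgC_cst 0) => m; rewrite big_nil.
rewrite big_cons; case: ifP => Px; last by apply: cvgC_eq IH => m; rewrite big_cons Px.
by apply: cvgC_eq (cvgCD (H x) IH) => m; rewrite big_cons Px.
Qed.

Lemma cvgC_prod (I : Type) (r : seq I) (P : pred I) (F : I -> nat -> C) (G : I -> C) :
  (forall i, cvgC (F i) (G i)) ->
  cvgC (fun m => \prod_(i <- r | P i) F i m) (\prod_(i <- r | P i) G i).
Proof.
move=> H; elim: r => [|x r IH].
  by rewrite big_nil; apply: cvgC_eq (cvgC_cst 1) => m; rewrite big_nil.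
rewrite big_cons; case: ifP => Px; last by apply: cvgC_eq IH => m; rewrite big_cons Px.
by apply: cvgC_eq (cvgCM (H x) IH) => m; rewrite big_cons Px.
Qed.

Lemma cvgCX u a k : cvgC u a -> cvgC (fun m => u m ^+ k) (a ^+ k).
Proof.
move=> hu; have := cvgC_prod (index_iota 0 k) xpredT (fun _ : nat => hu).
by rewrite prodr_const_nat subn0; apply: cvgC_eq => m; rewrite prodr_const_nat subn0.
Qed.

Lemma cvg_vec_entry n (a : nat -> vec R n) (a0 : vec R n) :
  cvg_vec a a0 -> forall i, cvgC (fun m => a m ord0 i) (a0 ord0 i).
Proof. by move=> ha i e /ha[N HN]; exists N => m /HN /(_ i); rewrite ltcR. Qed.

Lemma cvgC_ev n (p : {mpoly C[n]}) (a : nat -> vec R n) (a0 : vec R n) :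
  (forall i, cvgC (fun m => a m ord0 i) (a0 ord0 i)) ->
  cvgC (fun m => ev p (a m)) (ev p a0).
Proof.
move=> ha; rewrite /ev mevalE; apply: cvgC_eq (fun m => esym (mevalE _ _)) _.
apply: cvgC_sum => mm; apply: cvgCM (cvgC_cst _) _.
by apply: cvgC_prod => i; apply: cvgCX.
Qed.

Lemma cvgC_mulmx p1 p2 p3 (A : nat -> 'M[C]_(p1, p2)) (A0 : 'M[C]_(p1, p2)) (B : 'M[C]_(p2, p3)) :
  (forall i j, cvgC (fun m => A m i j) (A0 i j)) ->
  forall i j, cvgC (fun m => (A m *m B) i j) ((A0 *m B) i j).
Proof.
move=> hA i j; rewrite mxE; apply: cvgC_eq (fun m => esym (mxE _ _ _ _)) _.
by apply: cvgC_sum => k; apply: cvgCM (cvgC_cst _).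
Qed.

Lemma cvgC_det p (A : nat -> 'M[C]_p) (A0 : 'M[C]_p) :
  (forall i j, cvgC (fun m => A m i j) (A0 i j)) ->
  cvgC (fun m => \det (A m)) (\det A0).
Proof.
move=> hA; apply: cvgC_sum => s; apply: cvgCM (cvgC_cst _) _.
by apply: cvgC_prod.
Qed.

Lemma row_free_eventually p q (A : nat -> 'M[C]_(p, q)) (A0 : 'M[C]_(p, q)) :
  (forall i j, cvgC (fun m => A m i j) (A0 i j)) -> row_free A0 ->
  exists N, row_free (A N).
Proof.
move=> hA /row_freeP[B AB1]; have [N HN] := cvgC_det (cvgC_mulmx B hA) ltr01.
exists N; apply/row_freeP; exists (B *m invmx (A N *m B)).
rewrite mulmxA mulmxV // unitmxE unitfE.
apply: contraTneq (HN N (leqnn N)) => ->.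
by rewrite AB1 det1 sub0r normcN Normc.normc1 ltxx.
Qed.

End ComplexSequences.

Section RestrictionToLines.
Variables (R : realType) (r alpha : nat) (Q : 'I_alpha.+1 -> {mpoly R[i][r.+1]}).
Hypothesis Q2 : forall k, Q k \is 2.-homog.
Local Notation C := R[i].
Local Notation n := r.+1.
Local Notation N := alpha.+1.
Implicit Types (x a b P : vec R n).

Lemma in_baseE x : in_base Q x <-> Phivec Q x = 0.
Proof.
split => [x0|/rowP x0 k]; first by apply/rowP => k; rewrite !mxE x0.
by have := x0 k; rewrite !mxE.
Qed.

Lemma ev_comb (p : {mpoly C[n]}) a b s t : p \is 2.-homog ->
  ev p (s *: a + t *: b) =
  s ^+ 2 * ev p a + s * t * (ev p (a + b) - ev p a - ev p b) + t ^+ 2 * ev p b.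
Proof.
move=> p2; rewrite /ev.
rewrite (meval_eq p (v2 := fun i => s * a ord0 i + t * b ord0 i)); last by move=> i; rewrite !mxE.
rewrite meval_dhomog2_comb //.
rewrite (meval_eq p (v1 := fun i => a ord0 i + b ord0 i) (v2 := fun i => (a + b) ord0 i)) //.
by move=> i; rewrite !mxE.
Qed.

Definition Phi_coefmx a b : 'M[C]_(3, N) :=
  \matrix_(i < 3, k < N) [:: ev (Q k) a; ev (Q k) (a + b) - ev (Q k) a - ev (Q k) b;
                             ev (Q k) b]`_i.

Lemma Phivec_comb a b s t :
  Phivec Q (s *: a + t *: b) = veronese2 s t *m Phi_coefmx a b.
Proof.
apply/rowP => k; rewrite !mxE !big_ord_recl big_ord0 !mxE /= (ev_comb _ _ _ _ (Q2 k)).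
by ring.
Qed.

Lemma Phivec_comb_neq0 a b s t : row_free (Phi_coefmx a b) ->
  (s != 0) || (t != 0) -> Phivec Q (s *: a + t *: b) != 0.
Proof.
move=> free st; apply/eqP; rewrite Phivec_comb => /eqP.
rewrite mulmx_free_eq0 // => /eqP/veronese2_eq0[s0 t0].
by move: st; rewrite s0 t0 eqxx.
Qed.

Lemma Phivec_comb_proportional a b s1 t1 s2 t2 c : row_free (Phi_coefmx a b) ->
  (s2 != 0) || (t2 != 0) ->
  Phivec Q (s1 *: a + t1 *: b) = c *: Phivec Q (s2 *: a + t2 *: b) ->
  exists l, s1 = l * s2 /\ t1 = l * t2.
Proof.
move=> free st2; rewrite !Phivec_comb scalemxAl => /(row_free_inj free).
exact: veronese2_scale_proportional.
Qed.

Lemma cvgC_Phi_coefmx (a b : nat -> vec R n) a0 b0 :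
  cvg_vec a a0 -> cvg_vec b b0 ->
  forall i k, cvgC (fun m => Phi_coefmx (a m) (b m) i k) (Phi_coefmx a0 b0 i k).
Proof.
move=> ha hb i k; apply: cvgC_eq (fun m => esym (mxE _ _ _ _)) _; rewrite mxE.
have ea := cvgC_ev (Q k) (cvg_vec_entry ha).
have eb := cvgC_ev (Q k) (cvg_vec_entry hb).
have eab : cvgC (fun m => ev (Q k) (a m + b m)) (ev (Q k) (a0 + b0)).
  apply: cvgC_ev => j; rewrite mxE; apply: cvgC_eq (fun m => esym (mxE _ _ _ _)) _.
  by apply: cvgCD; apply: cvg_vec_entry.
case: i => -[|[|[|//]]] /= _ //.
exact: cvgCD (cvgCD eab (cvgCN ea)) (cvgCN eb).
Qed.

Lemma mem_fibre P x : preimage_set Q P x -> fibre Q P x.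
Proof. by move=> Px; split=> [|d p _ /(_ x Px)//]; case: Px. Qed.

Lemma fibre_self P : P != 0 -> ~ in_base Q P -> fibre Q P P.
Proof. by move=> P0 nbP; apply: mem_fibre; split=> //; split=> //; apply: proportional_refl. Qed.

(* Outside the base locus, the fibre is cut out by the quadrics
   [Q_k0(P) Q_j - Q_j(P) Q_k0], which vanish on [Phi^-1(Phi(P))]. *)
Lemma fibre_Phi_is P x : ~ in_base Q P -> fibre Q P x -> ~ in_base Q x ->
  Phi_is Q x (Phivec Q P).
Proof.
move=> nbP [_ closed] nbx.
have [k0 Pk0] : exists k0, ev (Q k0) P != 0.
  by apply: NNPP => nk; apply: nbP => k; apply: NNPP => Pk; apply: nk; exists k; apply/eqP.
have minors j : ev (Q k0) P * ev (Q j) x = ev (Q j) P * ev (Q k0) x.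
  apply/eqP; rewrite -subr_eq0; apply/eqP.
  have hom : ev (Q k0) P *: Q j - ev (Q j) P *: Q k0 \is 2.-homog by rewrite rpredB ?rpredZ.
  move: (closed 2%N _ hom); rewrite /ev !mevalB !mevalZ; apply.
  move=> y [_ [_ [c [_ /rowP Ey]]]]; have := Ey j; have := Ey k0.
  by rewrite !mxE /ev !mevalB !mevalZ => -> ->; ring.
have xk0 : ev (Q k0) x != 0.
  apply/eqP => xk0; apply: nbx => k; apply: (mulfI Pk0).
  by rewrite minors xk0 !mulr0.
exists (ev (Q k0) x / ev (Q k0) P); rewrite mulf_neq0 ?invr_eq0 //.
split=> //; apply/rowP => k; rewrite !mxE; apply: (mulfI Pk0).
by rewrite minors; field.
Qed.

Lemma secant_fibre_coefmx P L : ~ in_base Q P -> secant_line (fibre Q P) L ->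
  exists a0 b0, L = (<[a0]> + <[b0]>)%VS /\ ~~ row_free (Phi_coefmx a0 b0).
Proof.
move=> nbP [p [q [a [b [a0 [b0 [pq [span [ha [hb <-]]]]]]]]]].
exists a0, b0; split=> //; apply/negP => /(row_free_eventually (cvgC_Phi_coefmx ha hb)).
case=> m free; have [[p0 Pp] [[q0 Pq] npq]] := pq m.
have coords x : x \in (<[p m]> + <[q m]>)%VS -> x != 0 ->
    exists s t, (s != 0) || (t != 0) /\ x = s *: a m + t *: b m.
  by rewrite -span; apply: memv_span2_neq0.
have [s1 [t1 [st1 Ep]]] := coords _ (subvP (addvSl _ _) _ (memv_line _)) p0.
have [s2 [t2 [st2 Eq]]] := coords _ (subvP (addvSr _ _) _ (memv_line _)) q0.
have nb x s t : x = s *: a m + t *: b m -> (s != 0) || (t != 0) -> ~ in_base Q x.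
  by move=> -> st /in_baseE /eqP; apply/negP; apply: Phivec_comb_neq0.
have [c1 [c10 E1]] := fibre_Phi_is nbP (conj p0 Pp) (nb _ _ _ Ep st1).
have [c2 [c20 E2]] := fibre_Phi_is nbP (conj q0 Pq) (nb _ _ _ Eq st2).
have [|l [El Et]] := @Phivec_comb_proportional _ _ s1 t1 s2 t2 (c1 / c2) free st2.
  by rewrite -Ep -Eq E1 E2 scalerA divfK.
by apply: npq; rewrite Ep Eq; apply: proportional_comb El Et _; rewrite -Ep.
Qed.

End RestrictionToLines.

Section FactoredRestriction.
Variables (R : realType) (r alpha : nat) (Q : 'I_alpha.+1 -> {mpoly R[i][r.+1]}).
Local Notation C := R[i].
Local Notation n := r.+1.
Local Notation N := alpha.+1.
Variables (a b : vec R n) (u1 u2 : vec R N) (f1 f2 f3 g1 g2 g3 : C).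
Hypothesis hab : indep2 a b.
Hypothesis Phi_ab : forall s t,
  Phivec Q (s *: a + t *: b) = binq f1 f2 f3 s t *: u1 + binq g1 g2 g3 s t *: u2.
Hypothesis Phi_ab_neq0 : forall s t, (s != 0) || (t != 0) ->
  Phivec Q (s *: a + t *: b) != 0.

Lemma no_common_root s t : (s != 0) || (t != 0) ->
  binq f1 f2 f3 s t = 0 -> binq g1 g2 g3 s t = 0 -> False.
Proof.
by move=> st f0 g0; move/negP: (Phi_ab_neq0 st); rewrite Phi_ab f0 g0 !scale0r addr0.
Qed.

Lemma indep2_image : indep2 u1 u2.
Proof.
move=> c1 c2 E; apply: NNPP => c0.
have c0' : (c1 != 0) || (c2 != 0).
  by case: eqP => [c10|//]; case: eqP => [c20|//]; case: c0.
have [s [t [st]]] := binq_root (c2 * f1 - c1 * g1) (c2 * f2 - c1 * g2) (c2 * f3 - c1 * g3).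
rewrite binq_lincomb => /eqP; rewrite subr_eq0 => /eqP /(cross_eq0_scale c0') [l [Ef Eg]].
by move/negP: (Phi_ab_neq0 st); rewrite Phi_ab Ef Eg -!scalerA -scalerDr E scaler0.
Qed.

Lemma Phi_is_combP w1 w2 s t : (w1 != 0) || (w2 != 0) -> (s != 0) || (t != 0) ->
  Phi_is Q (s *: a + t *: b) (w1 *: u1 + w2 *: u2) <->
  w2 * binq f1 f2 f3 s t = w1 * binq g1 g2 g3 s t.
Proof.
move=> w st; split.
  case=> c [_]; rewrite Phi_ab scalerDr !scalerA => /(indep2_coord indep2_image)[-> ->].
  by ring.
case/(cross_eq0_scale w) => l [Ef Eg]; exists l; split.
  by apply/eqP => l0; apply: (no_common_root st); rewrite ?Ef ?Eg l0 mul0r.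
by rewrite Phi_ab Ef Eg scalerDr !scalerA.
Qed.

Lemma two_preimages_disc w1 w2 : (w1 != 0) || (w2 != 0) ->
  disc (w2 * f1 - w1 * g1) (w2 * f2 - w1 * g2) (w2 * f3 - w1 * g3) != 0 ->
  two_preimages Q (<[a]> + <[b]>)%VS (w1 *: u1 + w2 *: u2).
Proof.
move=> w; set h1 := w2 * f1 - _; set h2 := w2 * f2 - _; set h3 := w2 * f3 - _ => d0.
have h0 : (h1 != 0) || (h2 != 0) || (h3 != 0).
  apply: contraNT d0; rewrite !negb_or !negbK => /andP[/andP[/eqP-> /eqP->] /eqP->].
  by rewrite /disc; apply/eqP; ring.
have [c [s1 [t1 [s2 [t2 [c0 st1 st2 [E1 E2 E3]]]]]]] := binq_factor h0.
have preimP s t : (s != 0) || (t != 0) -> Phi_is Q (s *: a + t *: b) (w1 *: u1 + w2 *: u2) <->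
    c * (t1 * s - s1 * t) * (t2 * s - s2 * t) = 0.
  move=> st; rewrite Phi_is_combP // -binq_prodE -E1 -E2 -E3 binq_lincomb.
  by split=> [->|/eqP]; [rewrite subrr|rewrite subr_eq0 => /eqP].
have x0 s t : (s != 0) || (t != 0) -> s *: a + t *: b != 0 by apply: combv_neq0.
have span s t : s *: a + t *: b \in (<[a]> + <[b]>)%VS by apply/memv_span2P; exists s, t.
exists (s1 *: a + t1 *: b), (s2 *: a + t2 *: b); split; first by rewrite !span !x0.
split; first by apply/preimP => //; ring.
split; first by apply/preimP => //; ring.
split.
  case=> l [_]; rewrite scalerDr !scalerA => /(indep2_coord hab)[Es Et].
  have cross0 : t1 * s2 - t2 * s1 = 0 by rewrite Es Et; ring.
  by move: d0; rewrite E1 E2 E3 disc_prodE cross0 expr0n mulr0 eqxx.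
move=> x /memv_span2_neq0 xspan /xspan[s [t [st ->]]].
move=> /(preimP _ _ st) /eqP; rewrite !mulf_eq0 (negbTE c0) /= !subr_eq0.
by case/orP => /eqP E; [left|right]; apply: proportional_root E (x0 _ _ st).
Qed.

Lemma disc_pencilE w1 w2 :
  disc (w2 * f1 - w1 * g1) (w2 * f2 - w1 * g2) (w2 * f3 - w1 * g3) =
  binq (disc g1 g2 g3) (4 * (f1 * g3 + g1 * f3) - 2 * f2 * g2) (disc f1 f2 f3) w1 w2.
Proof. by rewrite /disc /binq; ring. Qed.

(* Two squares [f = a l^2] and [g = b m^2] make the middle coefficient [4 a b det(l, m)^2]:
   if all three vanish, [f] and [g] share the root of [l]. *)
Lemma disc_pencil_neq0 :
  (disc g1 g2 g3 != 0) || (4 * (f1 * g3 + g1 * f3) - 2 * f2 * g2 != 0) ||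
  (disc f1 f2 f3 != 0).
Proof.
apply: contraT; rewrite !negb_or !negbK => /andP[/andP[/eqP dg /eqP d2] /eqP df].
have nonzero (h1 h2 h3 k1 k2 k3 : C) : (forall s t, (s != 0) || (t != 0) ->
    binq h1 h2 h3 s t = 0 -> binq k1 k2 k3 s t = 0 -> False) ->
    (h1 != 0) || (h2 != 0) || (h3 != 0).
  move=> nc; apply: contraT; rewrite !negb_or !negbK => /andP[/andP[/eqP h10 /eqP h20] /eqP h30].
  have [s [t [st kst]]] := binq_root k1 k2 k3.
  by case: (nc s t st) => //; rewrite /binq h10 h20 h30; ring.
have [c [s [t [c0 st [Ef1 Ef2 Ef3]]]]] := binq_disc0_square (nonzero _ _ _ _ _ _ no_common_root) df.
have [d [s' [t' [d0 _ [Eg1 Eg2 Eg3]]]]] := binq_disc0_square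
  (nonzero _ _ _ _ _ _ (fun s t st g0 f0 => no_common_root st f0 g0)) dg.
have /eqP : 4 * c * d * (t * s' - s * t') ^+ 2 = 0.
  by rewrite -d2 Ef1 Ef2 Ef3 Eg1 Eg2 Eg3; ring.
rewrite !mulf_eq0 (negbTE c0) (negbTE d0) pnatr_eq0 /= orbb subr_eq0 => /eqP E.
exfalso; apply: (no_common_root st); rewrite /binq ?Ef1 ?Ef2 ?Ef3 ?Eg1 ?Eg2 ?Eg3.
  by ring.
have cross0 : t' * s - s' * t = 0 by rewrite mulrC [s' * t]mulrC E subrr.
by transitivity (d * (t' * s - s' * t) ^+ 2); [ring|rewrite cross0 expr0n mulr0].
Qed.

Lemma double_cover_span2 : double_cover_of_line Q (<[a]> + <[b]>)%VS.
Proof.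
have w_neq0 w1 w2 : w1 *: u1 + w2 *: u2 != 0 -> (w1 != 0) || (w2 != 0).
  by apply: contraNT; rewrite negb_or !negbK => /andP[/eqP-> /eqP->]; rewrite !scale0r addr0.
exists (<[u1]> + <[u2]>)%VS; split; first exact: indep2_dim_span2 indep2_image.
split.
  move=> x /memv_span2_neq0 xspan /xspan[s [t [_ ->]]].
  by rewrite Phi_ab; apply/memv_span2P; do 2 eexists.
split.
  move=> w /memv_span2P[w1 [w2 ->]] /w_neq0 w12.
  have [s [t [st]]] := binq_root (w2 * f1 - w1 * g1) (w2 * f2 - w1 * g2) (w2 * f3 - w1 * g3).
  rewrite binq_lincomb => /eqP; rewrite subr_eq0 => /eqP E.
  exists (s *: a + t *: b); split; last exact/(Phi_is_combP w12 st).
    by apply/memv_span2P; exists s, t.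
  exact: combv_neq0.
have [c [s1 [t1 [s2 [t2 [c0 st1 st2 [E1 E2 E3]]]]]]] := binq_factor disc_pencil_neq0.
exists [:: s1 *: u1 + t1 *: u2; s2 *: u1 + t2 *: u2].
move=> w /memv_span2P[w1 [w2 ->]] w0 ntwo; have w12 := w_neq0 _ _ w0.
have /eqP : disc (w2 * f1 - w1 * g1) (w2 * f2 - w1 * g2) (w2 * f3 - w1 * g3) = 0.
  by apply: NNPP => /eqP d0; apply: ntwo; apply: two_preimages_disc.
rewrite disc_pencilE E1 E2 E3 binq_prodE !mulf_eq0 (negbTE c0) /= !subr_eq0.
case/orP => /eqP E.
  by exists (s1 *: u1 + t1 *: u2); rewrite ?inE ?eqxx //; apply: proportional_root st1 E w0.
by exists (s2 *: u1 + t2 *: u2); rewrite ?inE ?eqxx ?orbT //; apply: proportional_root st2 E w0.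
Qed.

End FactoredRestriction.

Lemma not_row_free_factor (F : fieldType) m p (A : 'M[F]_(m.+1, p)) : ~~ row_free A ->
  exists (U : 'M[F]_(m.+1, m)) (V : 'M[F]_(m, p)), A = U *m V.
Proof.
move=> nfree; have rk : (\rank A <= m)%N.
  by move: nfree; rewrite /row_free -ltnS ltn_neqAle rank_leq_row andbT.
exists (col_ebase A *m pid_mx (\rank A)), (pid_mx (\rank A) *m row_ebase A).
rewrite -{1}(mulmx_ebase A) !mulmxA -[_ *m pid_mx _ *m pid_mx _]mulmxA mul_pid_mx.
by rewrite minnn (minn_idPr rk).
Qed.

Section SecantImpliesDoubleCover.
Variables (R : realType) (r alpha : nat) (Q : 'I_alpha.+1 -> {mpoly R[i][r.+1]}).
Hypothesis Q2 : forall k, Q k \is 2.-homog.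
Local Notation C := R[i].
Local Notation n := r.+1.
Local Notation N := alpha.+1.

Lemma Phivec_comb_factor a b (U : 'M[C]_(3, 2)) (V : 'M[C]_(2, N)) :
  Phi_coefmx Q a b = U *m V -> forall s t, Phivec Q (s *: a + t *: b) =
    binq (U 0 0) (U 1 0) (U 2%:R 0) s t *: row 0 V + binq (U 0 1) (U 1 1) (U 2%:R 1) s t *: row 1 V.
Proof.
move=> E s t; rewrite (Phivec_comb Q2) E mulmxA mulmx_sum_row !big_ord_recl big_ord0 addr0.
rewrite !mxE !big_ord_recl !big_ord0 !mxE /=.
have o0 : ord0 = 0 :> 'I_3 by [].
have o0' : ord0 = 0 :> 'I_2 by [].
have o1 : lift ord0 ord0 = 1 :> 'I_3 by apply: val_inj.
have o2 : lift ord0 (lift ord0 ord0) = 2%:R :> 'I_3 by apply: val_inj.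
have o1' : lift ord0 ord0 = 1 :> 'I_2 by apply: val_inj.
rewrite o0 o0' o1 o2 o1'.
by congr (_ *: _ + _ *: _); rewrite /binq; ring.
Qed.

Lemma secant_double_cover P L : \dim L = 2%N ->
  (forall x, x \in L -> x != 0 -> ~ in_base Q x) ->
  ~ in_base Q P -> secant_line (fibre Q P) L -> double_cover_of_line Q L.
Proof.
move=> dimL nbL nbP /(secant_fibre_coefmx Q2 nbP)[a [b [EL /not_row_free_factor[U [V E]]]]].
rewrite EL in dimL nbL *.
have hab := dim_span2_indep2 dimL.
apply: (double_cover_span2 hab (Phivec_comb_factor E)) => s t st.
apply/eqP => /in_baseE; apply: nbL (combv_neq0 hab st).
by apply/memv_span2P; exists s, t.
Qed.

End SecantImpliesDoubleCover.

Section ProjectiveLines.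
Variables (R : realType) (m : nat).
Local Notation C := R[i].

(* Pigeonhole: the [size s + 1] points [u1 + k u2] are pairwise non-proportional. *)
Lemma dim2_avoid_proportional (M : {vspace 'rV[C]_m}) (s : seq (vec R m)) :
  \dim M = 2%N ->
  exists w, [/\ w \in M, w != 0 & forall w', w' \in s -> ~ proportional w w'].
Proof.
case/dim2_basis=> u1 [u2 [u1M u2M hu]]; apply: NNPP => nw.
pose w (k : 'I_(size s).+1) : vec R m := u1 + k%:R *: u2.
have w_prop k : exists j : 'I_(size s), proportional (w k) s`_j.
  apply: NNPP => nj; apply: nw; exists (w k); split; first by rewrite rpredD ?rpredZ.
    by have := @combv_neq0 _ _ u1 u2 1 k%:R hu; rewrite scale1r oner_neq0; apply.
  by move=> w' w's pw'; apply: nj; exists (Ordinal (etrans (index_mem w' s) w's)); rewrite nth_index.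
have [j Hj] := fin_all_exists w_prop.
suff /leq_card : injective j by rewrite !card_ord ltnn.
move=> k1 k2 jk; have := Hj k1; rewrite jk => /proportional_trans.
case/(_ _ (proportional_sym (Hj k2))) => c [_]; rewrite /w scalerDr scalerA -[u1 in LHS]scale1r.
case/(indep2_coord hu) => <-; rewrite mul1r => /eqP; rewrite eqr_nat => /eqP.
exact: val_inj.
Qed.

Lemma secant_line_span2 (F : vec R m -> Prop) x y :
  F x -> F y -> ~ proportional x y -> secant_line F (<[x]> + <[y]>)%VS.
Proof.
move=> Fx Fy nxy; exists (fun=> x), (fun=> y), (fun=> x), (fun=> y), x, y.
have cvg_cst (v : vec R m) : cvg_vec (fun=> v) v.
  by move=> e e0; exists 0%N => k _ i; rewrite subrr normr0 ltcR.
by do ![split=> //].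
Qed.

End ProjectiveLines.

Section DoubleCoverImpliesSecant.
Variables (R : realType) (r alpha : nat) (Q : 'I_alpha.+1 -> {mpoly R[i][r.+1]}).
Hypothesis Q2 : forall k, Q k \is 2.-homog.
Local Notation n := r.+1.

(* A linear fibre through two points of a line contains the whole line, which
   [Phi] would then contract to the point [Phi(x1)]. *)
Lemma fibre_span2_not_linear x1 x2 x :
  x1 != 0 -> x2 != 0 -> ~ in_base Q x1 -> fibre Q x1 x2 ->
  x \in (<[x1]> + <[x2]>)%VS -> x != 0 -> ~ in_base Q x ->
  ~ Phi_is Q x (Phivec Q x1) -> ~ is_linear (fibre Q x1).
Proof.
move=> x10 x20 nb1 f2 xL x0 nbx nPx [W HW]; apply: nPx.
apply: (fibre_Phi_is Q2 nb1) nbx; apply/(HW _ x0).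
case/memv_span2P: xL => s [t ->].
by rewrite rpredD ?rpredZ //; [apply/(HW _ x10)/fibre_self|apply/(HW _ x20)].
Qed.

Lemma double_cover_secant L : \dim L = 2%N ->
  (forall x, x \in L -> x != 0 -> ~ in_base Q x) ->
  double_cover_of_line Q L ->
  exists P : vec R n,
    [/\ P != 0, ~ in_base Q P, ~ is_linear (fibre Q P) & secant_line (fibre Q P) L].
Proof.
move=> dimL nbL [M [dimM [PhiL [PhiL_onto [s two]]]]].
have [w [wM w0 ws]] := dim2_avoid_proportional s dimM.
have [x1 [x2 [[x1L x10 x2L x20] [Px1 [Px2 [n12 _]]]]]] : two_preimages Q L w.
  by apply: NNPP => ntwo; have [w' /ws] := two _ wM w0 ntwo.
have EL := dim2_span2 dimL x1L x2L (not_proportional_indep2 x10 x20 n12).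
have f2 : fibre Q x1 x2.
  apply: mem_fibre; split=> //; split; first exact: nbL.
  exact: proportional_trans Px2 (proportional_sym Px1).
have [u [uM u0 /(_ _ (mem_head _ _)) nu]] := dim2_avoid_proportional [:: Phivec Q x1] dimM.
have [x [xL x0 Pxu]] := PhiL_onto u uM u0.
exists x1; split=> //; first exact: nbL.
  apply: (fibre_span2_not_linear x10 x20 (nbL _ x1L x10) f2 _ x0 (nbL _ xL x0)).
    by rewrite -EL.
  by move=> Px; apply: nu; apply: proportional_trans (proportional_sym Pxu) Px.
by rewrite EL; apply: secant_line_span2 f2 n12; apply: fibre_self (nbL _ x1L x10).
Qed.

End DoubleCoverImpliesSecant.

Theorem lemma4p2 (R : realType) (r alpha : nat)
  (Q : 'I_alpha.+1 -> {mpoly R[i][r.+1]})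
  (HQ2 : forall k, Q k \is 2.-homog)
  (HQind : forall c : 'I_alpha.+1 -> R[i],
     \sum_k c k *: Q k = 0 -> forall k, c k = 0)
  (L : {vspace 'rV[R[i]]_r.+1})
  (HL : \dim L = 2%N)
  (HLX : forall x : 'rV[R[i]]_r.+1, x \in L -> x != 0 -> ~ in_base Q x) :
  double_cover_of_line Q L <->
  exists P : 'rV[R[i]]_r.+1,
    [/\ P != 0, ~ in_base Q P,
        ~ is_linear (fibre Q P) & secant_line (fibre Q P) L].
Proof.
split; first exact: double_cover_secant.
by case=> P [_ nbP _ sec]; apply: secant_double_cover sec.
Qed.
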